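(* A finite, simple, connected graph $G$ is randomly weak total $3$-dimensional if and only if $G$ is a cycle of odd order.
   Context: $d(x,y)$ is the shortest-path distance. A set $W\subseteq V(G)$ is a resolving set if for every two distinct vertices $y,z$ there is $x\in W$ with $d(y,x)\ne d(z,x)$. A set $W$ is a weak total resolving set (WTR-set) if $W$ is resolving and, for every $w\in W$ and every $x\in V(G)\setminus W$, there is $w'\in W\setminus\{w\}$ with $d(x,w')\ne d(w,w')$. $\dim_{wt}(G)$ is the minimum cardinality of a WTR-set. The weak total resolving number $res_{wt}(G)$ is the minimum positive integer $r$ such that every set of $r$ vertices of $G$ is a WTR-set. $G$ is randomly weak total $k$-dimensional if $\dim_{wt}(G)=res_{wt}(G)=k$. *)

(* A finite simple graph is a symmetric irreflexive
   relation e on a finType T. *)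
From mathcomp Require Import all_boot.
Set Implicit Arguments. Unset Strict Implicit. Unset Printing Implicit Defensive.

Section Graph.
Variables (T : finType) (e : rel T).

Definition walkb (n : nat) (x y : T) : bool :=
  [exists p : n.-tuple T, path e x p && (last x p == y)].

(* shortest-path distance: least n with a walk of length n from x to y
   (for connected graphs a shortest walk has fewer than #|T| edges;
   unreachable pairs get the junk value #|T|) *)
Definition dist (x y : T) : nat := find (fun n => walkb n x y) (iota 0 #|T|).

Definition resolving (W : {set T}) : Prop :=
  forall y z : T, y != z -> exists2 x, x \in W & dist y x != dist z x.

Definition wtr_set (W : {set T}) : Prop :=
  resolving W /\
  forall w x, w \in W -> x \notin W ->
    exists2 w', w' \in W :\ w & dist x w' != dist w w'.

Definition is_dim_wt (k : nat) : Prop :=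
  (exists2 W : {set T}, wtr_set W & #|W| = k) /\
  forall W : {set T}, wtr_set W -> k <= #|W|.

Definition all_sets_wtr (r : nat) : Prop :=
  forall W : {set T}, #|W| = r -> wtr_set W.

Definition is_res_wt (r : nat) : Prop :=
  0 < r /\ all_sets_wtr r /\ forall r', 0 < r' -> all_sets_wtr r' -> r <= r'.

Definition randomly_wt (k : nat) : Prop := is_dim_wt k /\ is_res_wt k.

Definition is_cycle_graph : Prop :=
  3 <= #|T| /\
  exists f : 'I_#|T| -> T, bijective f /\
    forall i j : 'I_#|T|,
      e (f i) (f j) = ((i.+1 %% #|T| == j) || (j.+1 %% #|T| == i)).

End Graph.

(* If every 3-set is a WTR-set, then for distinct a, x, b, c the pair {b, c}
   separates a from x.  Three neighbours of one vertex would then have pairwise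
   distinct mutual distances in {1, 2}, so all degrees are at most 2; a leaf is
   impossible, because the two ends of the path it starts form a WTR-set of
   size 2, while dim_wt = 3.  A connected 2-regular graph is a cycle, and an
   even cycle fails since 1 and n - 1 are equidistant from both 0 and n/2.
   Conversely, on an odd cycle any two distinct landmarks resolve every pair,
   so every set of at least three vertices is a WTR-set, whereas reflecting a
   through b shows that no set {a, b} is one. *)

From mathcomp Require Import all_boot zify.
Set Implicit Arguments. Unset Strict Implicit. Unset Printing Implicit Defensive.

Section Distance.
Variables (T : finType) (e : rel T).
Hypothesis esym : symmetric e.
Hypothesis eirr : irreflexive e.
Hypothesis econn : forall x y : T, connect e x y.

Lemma walkbP n x y :
  reflect (exists p : seq T, [/\ size p = n, path e x p & last x p = y])
          (walkb e n x y).
Proof.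
apply: (iffP existsP) => [[p /andP[ep /eqP <-]]|[p [sz_p ep <-]]].
  by exists (val p); rewrite size_tuple.
have sz_p' : size p == n by apply/eqP.
by exists (Tuple sz_p'); rewrite /= ep eqxx.
Qed.

Lemma walkb0 x : walkb e 0 x x.
Proof. by apply/walkbP; exists [::]. Qed.

Lemma walkb0_eq x y : walkb e 0 x y -> x = y.
Proof. by case/walkbP=> -[|? ?] []. Qed.

Lemma walkbS n x z y : e x z -> walkb e n z y -> walkb e n.+1 x y.
Proof.
move=> exz /walkbP [p [<- ep <-]]; apply/walkbP; exists (z :: p).
by rewrite /= exz ep.
Qed.

Lemma walkbSE n x y : walkb e n.+1 x y -> exists2 z, e x z & walkb e n z y.
Proof.
case/walkbP=> -[|z p] [] //= [sz_p] /andP[exz ep] <-.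
by exists z => //; apply/walkbP; exists p.
Qed.

Lemma walkb_cat m n x y z :
  walkb e m x y -> walkb e n y z -> walkb e (m + n) x z.
Proof.
elim: m x => [|m IHm] x; first by move/walkb0_eq ->.
by case/walkbSE=> w exw /IHm wz /wz; apply: walkbS exw.
Qed.

Lemma walkb1 x y : e x y -> walkb e 1 x y.
Proof. by move/walkbS; apply; apply: walkb0. Qed.

Lemma walkb_rev n x y : walkb e n x y -> walkb e n y x.
Proof.
elim: n x => [|n IHn] x; first by move/walkb0_eq ->; apply: walkb0.
case/walkbSE=> z exz /IHn zx; rewrite -addn1; apply: walkb_cat zx _.
by apply: walkb1; rewrite esym.
Qed.

Lemma walkb_short x y : has (fun n => walkb e n x y) (iota 0 #|T|).
Proof.
case/connectP: (econn x y) => p ep ->; case: (shortenP ep) => q eq uq _.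
apply/hasP; exists (size q); last by apply/walkbP; exists q.
by rewrite mem_iota /= -ltnS -[(size q).+1](card_uniqP uq); apply: max_card.
Qed.

Lemma dist_lt_card x y : dist e x y < #|T|.
Proof. by have := walkb_short x y; rewrite has_find size_iota. Qed.

Lemma dist_walkb x y : walkb e (dist e x y) x y.
Proof. by have := nth_find 0 (walkb_short x y); rewrite nth_iota ?dist_lt_card. Qed.

Lemma dist_min n x y : walkb e n x y -> dist e x y <= n.
Proof.
move=> wxy; rewrite leqNgt; apply/negP => lt_n.
have := before_find 0 lt_n; rewrite nth_iota ?wxy //.
exact: ltn_trans lt_n (dist_lt_card x y).
Qed.

Lemma dist_xx x : dist e x x = 0.
Proof. by apply/eqP; rewrite -leqn0 dist_min ?walkb0. Qed.

Lemma dist_eq0 x y : dist e x y = 0 -> x = y.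
Proof. by move=> dxy; have := dist_walkb x y; rewrite dxy => /walkb0_eq. Qed.

Lemma dist_sym x y : dist e x y = dist e y x.
Proof. by apply/eqP; rewrite eqn_leq !dist_min // walkb_rev // dist_walkb. Qed.

Lemma dist_triangle x y z : dist e x z <= dist e x y + dist e y z.
Proof. by apply: dist_min; apply: walkb_cat; apply: dist_walkb. Qed.

Lemma dist_adj x z y : e x z -> dist e x y <= (dist e z y).+1.
Proof. by move=> exz; apply: dist_min; apply: walkbS exz (dist_walkb _ _). Qed.

Lemma dist_geodesic k x y :
  dist e x y = k.+1 -> exists2 z, e x z & dist e z y = k.
Proof.
move=> dxy; have := dist_walkb x y; rewrite dxy => /walkbSE [z exz wzy].
exists z => //; apply/eqP; rewrite eqn_leq dist_min //=.
by have := dist_adj y exz; rewrite dxy.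
Qed.

Lemma exists_neighbour v x : x != v -> exists u, e v u.
Proof.
move=> neq_xv; case dvx: (dist e v x) => [|k].
  by move/dist_eq0: dvx neq_xv => ->; rewrite eqxx.
by have [u evu _] := dist_geodesic dvx; exists u.
Qed.

Lemma dist1 x y : e x y -> dist e x y = 1.
Proof.
move=> exy; apply/eqP; rewrite eqn_leq dist_min ?walkb1 //= lt0n.
by apply: contraTneq exy => /dist_eq0 ->; rewrite eirr.
Qed.

End Distance.

(* [i - j + (j - i)] is [|i - j|], the subtractions being truncated. *)
Definition cdist (n i j : nat) := minn (i - j + (j - i)) (n - (i - j + (j - i))).

Lemma eq_cdist_sum n y z b : y < n -> z < n -> b < n -> y != z ->
  cdist n y b = cdist n z b ->
  y + z = 2 * b \/ y + z + n = 2 * b \/ y + z = 2 * b + n.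
Proof.
move=> lt_y lt_z lt_b /eqP neq_yz; rewrite /cdist /minn.
by case: ifP; case: ifP; lia.
Qed.

Lemma oddE n : odd n -> n = 2 * n./2 + 1.
Proof. by move=> odd_n; rewrite -[n in LHS]odd_double_half odd_n mul2n addnC. Qed.

(* Both equalities say [y + z = 2b = 2c] modulo [n], and [2] is invertible
   modulo an odd [n]. *)
Lemma odd_cdist_resolving n y z b c : odd n ->
  y < n -> z < n -> b < n -> c < n -> y != z -> b != c ->
  cdist n y b = cdist n z b -> cdist n y c = cdist n z c -> False.
Proof.
move=> /oddE n_odd lt_y lt_z lt_b lt_c neq_yz /eqP neq_bc eq_b eq_c.
have := eq_cdist_sum lt_y lt_z lt_b neq_yz eq_b.
have := eq_cdist_sum lt_y lt_z lt_c neq_yz eq_c.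
lia.
Qed.

(* The witness is the reflection [2b - a] of [a] through [b], reduced
   modulo [n]; it differs from [a] because [n] is odd. *)
Lemma odd_cdist_mirror n a b : odd n -> a < n -> b < n -> a != b ->
  exists x, [/\ x < n, x != a, x != b & cdist n x b = cdist n a b].
Proof.
move=> /oddE n_odd lt_a lt_b /eqP neq_ab; rewrite /cdist.
have [le_ab|lt_ba] := leqP a b.
  have [lt_x|ge_x] := ltnP (2 * b - a) n.
    by exists (2 * b - a); split; try apply/eqP; lia.
  by exists (2 * b - a - n); split; try apply/eqP; lia.
have [le_x|lt_x] := leqP (a - b) b.
  by exists (2 * b - a); split; try apply/eqP; lia.
by exists (2 * b + n - a); split; try apply/eqP; lia.
Qed.

Lemma even_cdist_unresolved m : 1 < m ->
  cdist (2 * m) 1 0 = cdist (2 * m) (2 * m).-1 0 /\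
  cdist (2 * m) 1 m = cdist (2 * m) (2 * m).-1 m.
Proof. by rewrite /cdist => lt1m; split; lia. Qed.

Lemma modS_small a n : a < n -> a.+1 %% n = if a.+1 == n then 0 else a.+1.
Proof.
move=> lt_an; case: eqP => [->|/eqP neq_an]; first exact: modnn.
by rewrite modn_small // ltn_neqAle neq_an.
Qed.

Section CycleDistance.
Variables (T : finType) (e : rel T).
Hypothesis esym : symmetric e.
Hypothesis econn : forall x y : T, connect e x y.
Variables (f : 'I_#|T| -> T) (g : T -> 'I_#|T|).
Hypotheses (fK : cancel f g) (gK : cancel g f).
Hypothesis f_adj : forall i j : 'I_#|T|,
  e (f i) (f j) = (i.+1 %% #|T| == j) || (j.+1 %% #|T| == i).
Hypothesis n_gt0 : 0 < #|T|.

Let ordmod (m : nat) : 'I_#|T| := Ordinal (ltn_pmod m n_gt0).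

Lemma walkb_cycle_forward k (i : 'I_#|T|) : walkb e k (f i) (f (ordmod (i + k))).
Proof.
elim: k => [|k IHk].
  by rewrite addn0 (_ : ordmod i = i) ?walkb0 //; apply: val_inj; rewrite /= modn_small.
rewrite -addn1 addnA; apply: walkb_cat IHk (walkb1 _).
by rewrite f_adj /= -addn1 modnDml eqxx.
Qed.

Lemma dist_cycle_le (i j : 'I_#|T|) : dist e (f i) (f j) <= cdist #|T| i j.
Proof.
wlog le_ij : i j / i <= j.
  move=> le_dist; have [/le_dist //|/ltnW/le_dist] := leqP i j.
  by rewrite dist_sym // /cdist; lia.
have eq_j : ordmod (i + (j - i)) = j.
  by apply: val_inj; rewrite /= subnKC // modn_small.
have eq_i : ordmod (j + (#|T| - (j - i))) = i.
  apply: val_inj => /=; have lt_j := ltn_ord j.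
  have -> : j + (#|T| - (j - i)) = i + #|T| by lia.
  by rewrite modnDr modn_small.
have := dist_min econn (walkb_cycle_forward (j - i) i); rewrite eq_j.
have := dist_min econn (walkb_cycle_forward (#|T| - (j - i)) j); rewrite eq_i dist_sym //.
rewrite /cdist; lia.
Qed.

Lemma cdist_le_walkb m (i j : 'I_#|T|) : walkb e m (f i) (f j) -> cdist #|T| i j <= m.
Proof.
elim: m i => [|m IHm] i; first by move/walkb0_eq/(can_inj fK) ->; rewrite /cdist; lia.
case/walkbSE=> z; rewrite -[z]gK f_adj => adj /IHm.
have := ltn_ord i; have := ltn_ord (g z); have := ltn_ord j.
by rewrite /cdist; case/orP: adj => /eqP; rewrite (modS_small (ltn_ord _)); case: eqP; lia.
Qed.

Lemma dist_cycle (i j : 'I_#|T|) : dist e (f i) (f j) = cdist #|T| i j.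
Proof. by apply/eqP; rewrite eqn_leq dist_cycle_le cdist_le_walkb ?dist_walkb. Qed.

End CycleDistance.

Lemma cards3 (T : finType) (x y z : T) :
  x != y -> y != z -> z != x -> #|[set x; y; z]| = 3.
Proof.
by move=> neq_xy neq_yz neq_zx; rewrite setUC cardsU1 cards2 !inE negb_or neq_xy neq_zx (eq_sym z) neq_yz.
Qed.

Lemma resolvingS (T : finType) (e : rel T) (V W : {set T}) :
  V \subset W -> resolving e V -> resolving e W.
Proof.
move=> /subsetP sVW resV y z /resV [x xV dx]; exists x => //; exact: sVW.
Qed.

Section Sufficiency.
Variables (T : finType) (e : rel T).
Hypothesis T_gt2 : 2 < #|T|.
Hypothesis pair_resolving : forall b c : T, b != c -> resolving e [set b; c].
Hypothesis mirror : forall a b : T, a != b ->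
  exists x, [/\ x != a, x != b & dist e x b = dist e a b].

Lemma wtr_set_card_gt2 (W : {set T}) : 2 < #|W| -> wtr_set e W.
Proof.
move=> W_gt2; split.
  have /card_gt1P [b [c [bW cW neq_bc]]] : 1 < #|W| by apply: ltnW.
  apply: resolvingS (pair_resolving neq_bc).
  by apply/subsetP => x; rewrite !inE => /orP[] /eqP ->.
move=> w x wW xW; have neq_xw : x != w by apply: contraNneq xW => ->.
have /card_gt1P [b [c [bW cW neq_bc]]] : 1 < #|W :\ w| by move: W_gt2; rewrite (cardsD1 w) wW.
have [u] := pair_resolving neq_bc neq_xw.
by rewrite !inE => /orP[] /eqP ->; [exists b | exists c].
Qed.

Lemma card_wtr_set_gt2 (W : {set T}) : wtr_set e W -> 2 < #|W|.
Proof.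
case=> resW sepW; rewrite ltnNge; apply/negP => W_le2.
have [x xW] : exists x, x \notin W.
  have /card_gt0P [x] : 0 < #|~: W| by move: T_gt2; rewrite -(cardsC W); lia.
  by rewrite inE; exists x.
have [a aW] : exists a, a \in W.
  by have [y [z [_ _ /resW [a aW _]]]] := card_gt1P (ltnW T_gt2); exists a.
have [b bWa _] := sepW a x aW xW.
have W_ab : W = [set a; b].
  apply/eqP; rewrite eq_sym eqEcard cards2; move: bWa; rewrite in_setD1 => /andP[neq_ba bW].
  apply/andP; split; last by rewrite eq_sym neq_ba.
  by apply/subsetP => y; rewrite !inE => /orP[] /eqP ->.
move: bWa; rewrite in_setD1 => /andP [neq_ba _].
have [y [neq_ya neq_yb dy]] : exists y, [/\ y != a, y != b & dist e y b = dist e a b].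
  by apply: mirror; rewrite eq_sym.
have yW : y \notin W by rewrite W_ab !inE negb_or neq_ya.
have [w'] := sepW a y aW yW.
rewrite W_ab !inE => /andP[neq_w'a /orP[/eqP w'a|/eqP->]].
  by rewrite w'a eqxx in neq_w'a.
by rewrite dy eqxx.
Qed.

Lemma randomly_wt3 : randomly_wt e 3.
Proof.
have [x [y [z [_ [neq_xy neq_yz neq_zx]]]]] := card_gt2P T_gt2.
split; split.
- exists [set x; y; z]; last exact: cards3.
  by apply: wtr_set_card_gt2; rewrite cards3.
- exact: card_wtr_set_gt2.
- by [].
split; first by move=> W W3; apply: wtr_set_card_gt2; rewrite W3.
move=> [|[|[|r]]] // _ all_r.
- by have := card_wtr_set_gt2 (all_r _ (cards1 x)); rewrite cards1.
- have := card_wtr_set_gt2 (all_r [set x; y] _).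
  by rewrite cards2 neq_xy; apply.
Qed.

End Sufficiency.

Section OddCycle.
Variables (T : finType) (e : rel T).
Hypothesis esym : symmetric e.
Hypothesis econn : forall x y : T, connect e x y.
Variables (f : 'I_#|T| -> T) (g : T -> 'I_#|T|).
Hypotheses (fK : cancel f g) (gK : cancel g f).
Hypothesis f_adj : forall i j : 'I_#|T|,
  e (f i) (f j) = (i.+1 %% #|T| == j) || (j.+1 %% #|T| == i).
Hypothesis n_odd : odd #|T|.

Let n_gt0 : 0 < #|T|. Proof. by case: #|T| n_odd. Qed.
Let dist_g x y : dist e x y = cdist #|T| (g x) (g y).
Proof. by rewrite -(dist_cycle esym econn fK gK f_adj n_gt0) !gK. Qed.

Let neq_g x y : x != y -> (g x : nat) != g y.
Proof. by apply: contra => /eqP/val_inj/(can_inj gK) ->. Qed.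

Lemma odd_cycle_pair_resolving b c : b != c -> resolving e [set b; c].
Proof.
move=> neq_bc y z neq_yz.
have [dyb|] := eqVneq (dist e y b) (dist e z b); last by exists b; rewrite ?inE ?eqxx.
have [dyc|] := eqVneq (dist e y c) (dist e z c); last by exists c; rewrite ?inE ?eqxx ?orbT.
exfalso; move: dyb dyc; rewrite !dist_g.
by apply: odd_cdist_resolving; rewrite ?ltn_ord ?neq_g.
Qed.

Lemma odd_cycle_mirror a b : a != b ->
  exists x, [/\ x != a, x != b & dist e x b = dist e a b].
Proof.
move/neq_g/(odd_cdist_mirror n_odd (ltn_ord _) (ltn_ord _)) => [x [lt_x neq_xa neq_xb dx]].
exists (f (Ordinal lt_x)); split.
- by apply: contra neq_xa => /eqP <-; rewrite fK.
- by apply: contra neq_xb => /eqP <-; rewrite fK.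
- by rewrite !dist_g fK.
Qed.

End OddCycle.

Definition neighbours (T : finType) (e : rel T) (v : T) : {set T} := [set u | e v u].

Section MaxDegreeTwo.
Variables (T : finType) (e : rel T).
Hypothesis esym : symmetric e.
Hypothesis eirr : irreflexive e.
Hypothesis econn : forall x y : T, connect e x y.
Hypothesis deg_le2 : forall v, #|neighbours e v| <= 2.

Lemma neighbour_cases p x y z :
  e p x -> e p y -> e p z -> x != y -> z = x \/ z = y.
Proof.
move=> epx epy epz neq_xy; have [->|neq_zx] := eqVneq z x; first by left.
have [->|neq_zy] := eqVneq z y; first by right.
have := deg_le2 p; rewrite leqNgt => /card_gt2P; case.
by exists x, y, z; rewrite !inE epx epy epz neq_xy (eq_sym y) neq_zy neq_zx.
Qed.

Lemma leaf_dist_inj v u : neighbours e v = [set u] -> injective (dist e v).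
Proof.
move=> Nv; have leaf z : e v z -> z = u by move=> evz; apply/set1P; rewrite -Nv inE.
suff dist_inj k x x' : dist e v x = k -> dist e v x' = k -> x = x'.
  by move=> x x' dx; apply: (dist_inj _ x x' dx).
elim: k x x' => [|k IHk] x x'; first by move=> /(dist_eq0 econn) <- /(dist_eq0 econn) <-.
rewrite (dist_sym esym econn v x) (dist_sym esym econn v x') => dx dx'.
have [p exp dp] := dist_geodesic econn dx.
have [p' ex'p' dp'] := dist_geodesic econn dx'.
have ? : p' = p by apply: IHk; rewrite (dist_sym esym econn).
subst p'.
case: k IHk dx dx' dp dp' => [|k] _ dx dx' dp _.
  by move/(dist_eq0 econn): dp exp ex'p' => ->; rewrite !(esym _ v) => /leaf -> /leaf ->.
have [q epq dq] := dist_geodesic econn dp.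
have [->|neq_xx'] := eqVneq x x' => //.
rewrite esym in exp; rewrite esym in ex'p'.
by have [qx|qx'] := neighbour_cases exp ex'p' epq neq_xx'; subst q; lia.
Qed.

(* The vertex farthest from a leaf is again a leaf, and distances from either
   end of the resulting path separate all vertices. *)
Lemma leaf_pair_wtr v u :
  e v u -> neighbours e v = [set u] -> exists2 y, y != v & wtr_set e [set v; y].
Proof.
move=> evu Nv; have inj_v := leaf_dist_inj Nv.
have [y _ max_y] := @arg_maxnP T v xpredT (dist e v) isT.
have [D dy] : exists D, dist e v y = D.+1.
  case: (dist e v y) (max_y u isT) => [|D] /=; last by exists D.
  by rewrite leqn0 => /eqP/(dist_eq0 econn) eq_vu; rewrite eq_vu eirr in evu.
have [p eyp dp] := dist_geodesic econn (etrans (dist_sym esym econn y v) dy).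
have Ny : neighbours e y = [set p].
  apply/setP => z; rewrite !inE; apply/idP/eqP => [eyz|-> //]; apply: (inj_v).
  have neq_dz : dist e v z != dist e v y.
    by apply: contraTneq eyz => /inj_v ->; rewrite eirr.
  move: neq_dz (max_y z isT) (dist_adj econn v eyz) => /=.
  by rewrite !(dist_sym esym econn _ v) in dp dy *; lia.
have separates l : injective (dist e l) -> forall a b, a != b -> dist e a l != dist e b l.
  by move=> inj_l a b; apply: contra => /eqP; rewrite !(dist_sym esym econn _ l) => /inj_l ->.
have neq_yv : y != v by apply/eqP => yv; move: dy; rewrite yv dist_xx.
exists y => //; split.
  by move=> a b /(separates _ inj_v); exists v; rewrite ?inE ?eqxx.
move=> w x; rewrite !inE negb_or => /orP[] /eqP -> /andP[neq_xv neq_xy].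
- exists y; first by rewrite !inE eqxx orbT neq_yv.
  exact: separates (leaf_dist_inj Ny) _ _ neq_xv.
- exists v; first by rewrite !inE eqxx eq_sym neq_yv.
  exact: separates inj_v _ _ neq_xy.
Qed.

End MaxDegreeTwo.

Section AllTriplesWtr.
Variables (T : finType) (e : rel T).
Hypothesis esym : symmetric e.
Hypothesis eirr : irreflexive e.
Hypothesis econn : forall x y : T, connect e x y.
Hypothesis wtr3 : all_sets_wtr e 3.

Lemma wtr3_separates a x b c : uniq [:: a; x; b; c] ->
  (dist e x b != dist e a b) || (dist e x c != dist e a c).
Proof.
rewrite /= !inE !negb_or => /and4P[/and3P[neq_ax neq_ab neq_ac] /andP[neq_xb neq_xc] neq_bc _].
have neq_ca : c != a by rewrite eq_sym.
have [_ sep] := wtr3 (cards3 neq_ab neq_bc neq_ca).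
have aW : a \in [set a; b; c] by rewrite !inE eqxx.
have xW : x \notin [set a; b; c] by rewrite !inE !negb_or (eq_sym x) neq_ax neq_xb neq_xc.
have [w'] := sep a x aW xW.
rewrite !inE => /andP[neq_w'a /orP[/orP[/eqP w'a|/eqP ->]|/eqP ->]] dx.
- by rewrite w'a eqxx in neq_w'a.
- by rewrite dx.
- by rewrite dx orbT.
Qed.

(* Three neighbours of [v] would have pairwise different mutual distances,
   all of them in [{1, 2}]. *)
Lemma wtr3_neighbours_le2 v : #|neighbours e v| <= 2.
Proof.
rewrite leqNgt; apply/card_gt2P => -[a [b [c [[]]]]].
rewrite !inE => eva evb evc [neq_ab neq_bc neq_ca].
have dvx x : e v x -> dist e x v = 1 by move=> evx; rewrite dist1 // esym.
have neq_v x : e v x -> x != v by apply: contraTneq => ->; rewrite eirr.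
have d_le2 x y : e v x -> e v y -> dist e x y <= 2.
  by move=> evx evy; rewrite (leq_trans (dist_triangle econn x v y)) // (dist_sym esym econn v y) !dvx.
have d_gt0 x y : x != y -> 0 < dist e x y.
  by move=> neq_xy; rewrite lt0n; apply: contra neq_xy => /eqP/(dist_eq0 econn) ->.
have sep x y z : e v x -> e v y -> e v z -> x != y -> y != z -> z != x ->
    dist e y z != dist e x z.
  move=> evx evy evz neq_xy neq_yz neq_zx.
  have := @wtr3_separates x y z v; rewrite !dvx // eqxx orbF; apply.
  by rewrite /= !inE !negb_or neq_xy (eq_sym x) neq_zx neq_yz !neq_v.
have := sep _ _ _ eva evb evc neq_ab neq_bc neq_ca.
have := sep _ _ _ evb evc eva neq_bc neq_ca neq_ab.
have := sep _ _ _ evc eva evb neq_ca neq_ab neq_bc.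
have := d_le2 _ _ eva evb; have := d_le2 _ _ evb evc; have := d_le2 _ _ evc eva.
have := d_gt0 _ _ neq_ab; have := d_gt0 _ _ neq_bc; have := d_gt0 _ _ neq_ca.
rewrite !(dist_sym esym econn b a) !(dist_sym esym econn c b) !(dist_sym esym econn a c).
lia.
Qed.

Lemma wtr3_two_regular : 1 < #|T| -> (forall W, wtr_set e W -> 2 < #|W|) ->
  forall v, #|neighbours e v| = 2.
Proof.
move=> T_gt1 wtr_gt2 v.
have [x neq_xv] : exists x, x != v.
  have [y [z [_ _ neq_yz]]] := card_gt1P T_gt1.
  by have [<-|] := eqVneq y v; [exists z; rewrite eq_sym | exists y].
have [u evu] := exists_neighbour econn neq_xv.
have Nv_gt0 : 0 < #|neighbours e v| by apply/card_gt0P; exists u; rewrite inE.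
have Nv_neq1 : #|neighbours e v| != 1.
  apply/negP => /cards1P [u' Nv]; have evu' : e v u' by rewrite -inE -/(neighbours e v) Nv set11.
  have [y neq_yv wtr_vy] := leaf_pair_wtr esym eirr econn wtr3_neighbours_le2 evu' Nv.
  by have := wtr_gt2 _ wtr_vy; rewrite cards2 eq_sym neq_yv.
by have := wtr3_neighbours_le2 v; lia.
Qed.

Lemma wtr3_cycle_odd (f : 'I_#|T| -> T) (g : T -> 'I_#|T|) :
  cancel f g -> cancel g f ->
  (forall i j : 'I_#|T|, e (f i) (f j) = (i.+1 %% #|T| == j) || (j.+1 %% #|T| == i)) ->
  3 <= #|T| -> odd #|T|.
Proof.
move=> fK gK f_adj n_ge3; apply/negPn/negP => n_even.
have n_eq : #|T| = 2 * #|T|./2 by rewrite -[in LHS](odd_double_half #|T|) (negbTE n_even) mul2n.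
move: #|T|./2 n_eq => m n_eq.
have lt_0 : 0 < #|T| by lia.
have lt_1 : 1 < #|T| by lia.
have lt_l : #|T|.-1 < #|T| by lia.
have lt_m : m < #|T| by lia.
pose o k (lt_k : k < #|T|) := f (Ordinal lt_k).
have uniq_pts : uniq [:: o _ lt_1; o _ lt_l; o _ lt_0; o _ lt_m].
  by rewrite (map_inj_uniq (can_inj fK) [:: Ordinal lt_1; _; _; _]) /= !inE -!val_eqE /= n_eq; lia.
have := wtr3_separates uniq_pts; rewrite !(dist_cycle esym econn fK gK f_adj lt_0) /= n_eq.
have lt1m : 1 < m by lia.
have [-> ->] := even_cdist_unresolved lt1m.
by rewrite !eqxx.
Qed.

End AllTriplesWtr.

Section TwoRegularCycle.
Variables (T : finType) (e : rel T).
Hypothesis esym : symmetric e.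
Hypothesis eirr : irreflexive e.
Hypothesis econn : forall x y : T, connect e x y.
Hypothesis two_regular : forall v, #|neighbours e v| = 2.
Variables v0 v1 : T.
Hypothesis e01 : e v0 v1.

Definition other u w := odflt u [pick z in neighbours e u :\ w].

Lemma other_spec u w z : e u w -> ((z != w) && e u z) = (z == other u w).
Proof.
move=> euw; have /cards1P [y Nu] : #|neighbours e u :\ w| == 1.
  by move: (two_regular u); rewrite (cardsD1 w) inE euw add1n => -[->].
have -> : other u w = y by rewrite /other Nu; case: pickP => [y' /set1P -> //|/(_ y)]; rewrite set11.
by have := congr1 (fun A : {set T} => z \in A) Nu; rewrite !inE.
Qed.

Lemma other_neq_adj u w : e u w -> (other u w != w) && e u (other u w).
Proof. by move=> euw; rewrite other_spec. Qed.

Definition walk_state k := iter k (fun p => (p.2, other p.2 p.1)) (v0, v1).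
Definition cycle_walk k := (walk_state k).1.
Local Notation s := cycle_walk.

Lemma cycle_walkSS k : s k.+2 = other (s k.+1) (s k).
Proof. by []. Qed.

Lemma cycle_walk_adj k : e (s k) (s k.+1).
Proof.
elim: k => [//|k IHk]; rewrite cycle_walkSS.
by case/andP: (other_neq_adj (etrans (esym _ _) IHk)).
Qed.

Lemma cycle_walkSS_neq k : s k.+2 != s k.
Proof.
rewrite cycle_walkSS.
by case/andP: (other_neq_adj (etrans (esym _ _) (cycle_walk_adj k))).
Qed.

Lemma cycle_walk_neighbour k z : e (s k.+1) z -> z = s k \/ z = s k.+2.
Proof.
move=> ez; have [->|neq_z] := eqVneq z (s k); [by left | right].
by apply/eqP; rewrite cycle_walkSS -other_spec ?neq_z // esym cycle_walk_adj.
Qed.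

Definition repeats j := s j \in map s (iota 0 j).

Lemma exists_repeat : exists j, repeats j.
Proof.
suff: ~~ uniq (map s (iota 0 #|T|.+1)).
  elim: #|T|.+1 => [//|n IHn]; rewrite -addn1 iotaD map_cat cat_uniq /= orbF andbT.
  by rewrite negb_and negbK => /orP[/IHn //|s_rep]; exists n.
apply/negP => /card_uniqP; rewrite size_map size_iota => card_s.
by have := max_card (mem (map s (iota 0 #|T|.+1))); rewrite card_s ltnn.
Qed.

Definition period := ex_minn exists_repeat.
Local Notation p := period.

Lemma repeats_period : repeats p.
Proof. by rewrite /p; case: ex_minnP. Qed.

Lemma period_min j : repeats j -> p <= j.
Proof. by rewrite /p; case: ex_minnP => m _; apply. Qed.

Lemma cycle_walk_inj a b : a < p -> b < p -> s a = s b -> a = b.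
Proof.
wlog lt_ab : a b / a < b.
  move=> inj lt_a lt_b sab; have [lt|lt|//] := ltngtP a b; first exact: inj.
  exact/sym_eq/(inj b a).
move=> _ lt_b sab; suff: p <= b by rewrite leqNgt lt_b.
by apply: period_min; apply/mapP; exists a; rewrite ?mem_iota.
Qed.

(* The first repetition of the walk returns to its start: any other one would
   give a third neighbour of a vertex or a step straight back. *)
Lemma cycle_walk_period : s p = s 0.
Proof.
have /mapP [[//|i]] := repeats_period; rewrite mem_iota /= => lt_ip s_pi.
have [q p_eq] : exists q, p = q.+1 by exists p.-1; rewrite prednK // (leq_trans _ lt_ip).
have lt_q : q < p by rewrite p_eq.
have := cycle_walk_adj q; rewrite -p_eq s_pi esym => /cycle_walk_neighbour [s_qi|s_qi].
  by have := cycle_walk_inj lt_q (ltnW lt_ip) s_qi; lia.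
have [lt_i2|ge_i2] := ltnP i.+2 p.
  have q_eq := cycle_walk_inj lt_q lt_i2 s_qi; subst q.
  by have := cycle_walkSS_neq i.+1; rewrite -p_eq s_pi eqxx.
have q_eq : q = i.+1 by lia.
by have := cycle_walk_adj q; rewrite -p_eq s_pi q_eq eirr.
Qed.

Lemma period_ge3 : 3 <= p.
Proof.
have := cycle_walk_period; have /mapP [i] := repeats_period; rewrite mem_iota /=.
case: p => [|[|[|//]]] //= _ _ s_p.
- by have := cycle_walk_adj 0; rewrite s_p eirr.
- by have := cycle_walkSS_neq 0; rewrite s_p eqxx.
Qed.

Lemma period_gt0 : 0 < p.
Proof. exact: leq_trans period_ge3. Qed.

Lemma walk_state_period : walk_state p = walk_state 0.
Proof.
have p_ge3 := period_ge3.
rewrite [walk_state p]surjective_pairing -/(s p) cycle_walk_period.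
have [q p_eq] : exists q, p = q.+1 by exists p.-1; rewrite prednK // period_gt0.
rewrite [(walk_state p).2](_ : _ = s p.+1) // p_eq cycle_walkSS -p_eq cycle_walk_period.
congr (_, _); symmetry; apply/eqP.
rewrite -other_spec; last by rewrite esym -cycle_walk_period p_eq cycle_walk_adj.
apply/andP; split=> //; apply/negP => /eqP s_q1.
suff: 1 = q by move: p_ge3; rewrite p_eq; lia.
by apply: (cycle_walk_inj (a := 1) (b := q)) => //; rewrite p_eq; lia.
Qed.

Lemma cycle_walkDp k : s (k + p) = s k.
Proof. by rewrite /s /walk_state iterD -/(walk_state p) walk_state_period. Qed.

Lemma cycle_walk_mod m : s m = s (m %% p).
Proof.
rewrite {1}(divn_eq m p); elim: (m %/ p) => [|d IHd]; first by rewrite mul0n add0n.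
by rewrite mulSn -addnA addnC cycle_walkDp.
Qed.

Lemma cycle_walk_pred k : s k = s (k + p).-1.+1.
Proof. by rewrite prednK ?cycle_walkDp // addn_gt0 period_gt0 orbT. Qed.

Lemma cycle_walk_surj y : exists2 k, k < p & s k = y.
Proof.
suff [k <-] : exists k, s k = y.
  by exists (k %% p); rewrite -?cycle_walk_mod // ltn_pmod // period_gt0.
have : walkb e (dist e v0 y) (s 0) y by exact: dist_walkb.
elim: (dist e v0 y) 0 => [|m IHm] k; first by move/walkb0_eq <-; exists k.
case/walkbSE => z; rewrite cycle_walk_pred => /cycle_walk_neighbour [->|->]; exact: IHm.
Qed.

Lemma period_card : p = #|T|.
Proof.
have s_inj : injective (fun i : 'I_p => s i).
  by move=> i j /cycle_walk_inj eq_ij; apply/val_inj/eq_ij.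
apply/eqP; rewrite eqn_leq; apply/andP; split.
  by have := @leq_card _ _ _ s_inj; rewrite card_ord.
have := @card_codom _ _ _ s_inj; rewrite card_ord => <-.
apply: subset_leq_card; apply/subsetP => y _.
by have [k lt_k <-] := cycle_walk_surj y; apply/codomP; exists (Ordinal lt_k).
Qed.

Lemma cycle_walk_adjE i j : i < p -> j < p ->
  e (s i) (s j) = (i.+1 %% p == j) || (j.+1 %% p == i).
Proof.
move=> lt_i lt_j; have p_gt0 := period_gt0.
apply/idP/orP => [|[] /eqP <-]; last 2 first.
- by rewrite -cycle_walk_mod cycle_walk_adj.
- by rewrite esym -cycle_walk_mod cycle_walk_adj.
rewrite {1}cycle_walk_pred => /cycle_walk_neighbour [|] s_j; [right|left].
- rewrite (cycle_walk_inj lt_j (ltn_pmod _ p_gt0) (etrans s_j (cycle_walk_mod _))).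
  by rewrite -addn1 modnDml addn1 prednK ?modnDr ?modn_small // addn_gt0 p_gt0 orbT.
- rewrite (cycle_walk_inj lt_j (ltn_pmod _ p_gt0) (etrans s_j (cycle_walk_mod _))).
  have -> : (i + p).-1.+2 = i.+1 + p by lia.
  by rewrite modnDr.
Qed.

Lemma two_regular_cycle : is_cycle_graph e.
Proof.
have n_eq := period_card; split; first by rewrite -n_eq period_ge3.
have lt_p (i : 'I_#|T|) : i < p by rewrite n_eq.
have s_inj : injective (fun i : 'I_#|T| => s i).
  by move=> i j /(cycle_walk_inj (lt_p i) (lt_p j)) /val_inj.
exists (fun i => s i); split; first by apply: (@inj_card_bij _ _ _ s_inj); rewrite card_ord.
by move=> i j; rewrite cycle_walk_adjE // n_eq.
Qed.

End TwoRegularCycle.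

Theorem corollary5 (T : finType) (e : rel T)
  (esym : symmetric e) (eirr : irreflexive e)
  (econn : forall x y : T, connect e x y) :
  randomly_wt e 3 <-> (is_cycle_graph e /\ odd #|T|).
Proof.
split=> [[[[W _ card_W] wtr_gt2] [_ [wtr3 _]]]|[[n_ge3 [f [[g fK gK] f_adj]]] n_odd]].
  have n_ge3 : 3 <= #|T| by rewrite -card_W max_card.
  have two_reg := wtr3_two_regular esym eirr econn wtr3 (ltnW n_ge3) wtr_gt2.
  have [v0 _] : exists v0, v0 \in T by apply/card_gt0P; rewrite (leq_trans _ n_ge3).
  have [v1] : exists v1, v1 \in neighbours e v0 by apply/card_gt0P; rewrite two_reg.
  rewrite inE => e01; have cycle_e := two_regular_cycle esym eirr econn two_reg e01.
  split=> //; case: cycle_e => _ [f [[g fK gK] f_adj]].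
  exact: (wtr3_cycle_odd esym econn wtr3 fK gK f_adj n_ge3).
apply: randomly_wt3 => //.
- exact: (odd_cycle_pair_resolving esym econn fK gK f_adj n_odd).
- exact: (odd_cycle_mirror esym econn fK gK f_adj n_odd).
Qed.
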